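(* Let $G$ be a finite group, $H$ a subgroup of $G$ and $N$ a normal subgroup of $G$ with $NH=G$. Let $p$ be a prime dividing both $(G:H)$ and $(G:N)$, and let $P$ be a $p$-Sylow subgroup of $G$. If $g\in G$ satisfies $\mathrm{ord}_p(P:P\cap gHg^{-1})=\mathrm{ord}_p(G:H)$, then $(P\cap N)\cdot(P\cap gHg^{-1})=P$.
   Context: $\mathrm{ord}_p$ denotes the exponent of the prime $p$ in a positive integer. *)

From mathcomp Require Export all_boot all_fingroup all_solvable.

(* Put K := H^(g^-1).  Since NK = G, the index (N : N ∩ K) equals (G : H), and
   P ∩ N is a Sylow p-subgroup of N, so
     ord_p|P ∩ N| = ord_p(G : H) + ord_p|N ∩ K| >= ord_p(G : H) + ord_p|P ∩ N ∩ K|,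
   while the hypothesis says ord_p|P| = ord_p(G : H) + ord_p|P ∩ K|.  Hence
   |(P ∩ N)(P ∩ K)| = |P ∩ N| |P ∩ K| / |P ∩ N ∩ K| >= |P|, and the product,
   contained in P, is all of P. *)


Set Implicit Arguments.
Unset Strict Implicit.
Unset Printing Implicit Defensive.
Import GroupScope.

Lemma mulg_conj_normal (gT : finGroupType) (G H N : {group gT}) (x : gT) :
  N <| G -> N * H = G -> x \in G -> N * H :^ x = G.
Proof.
move=> nNG eNH Gx.
by rewrite -{1}(normP (subsetP (normal_norm nNG) x Gx)) -conjsMg eNH conjGid.
Qed.

Lemma index_normal_setI (gT : finGroupType) (G K N : {group gT}) :
  N <| G -> K \subset G -> N * K = G -> #|N : N :&: K| = #|G : K|.
Proof.
move=> nNG sKG eNK.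
have nNK : K \subset 'N(N) := subset_trans sKG (normal_norm nNG).
by rewrite indexgI -indexMg (normC nNK) eNK.
Qed.

Lemma logn_card_LagrangeI (gT : finGroupType) (p : nat) (A B : {group gT}) :
  logn p #|A| = logn p #|A : A :&: B| + logn p #|A :&: B|.
Proof. by rewrite -{1}(LagrangeI A B) mulnC -indexgI lognM ?indexg_gt0. Qed.

Lemma logn_card_Sylow_setI_normal (gT : finGroupType) (p : nat)
    (G N P : {group gT}) :
  N <| G -> p.-Sylow(G) P -> logn p #|P :&: N| = logn p #|N|.
Proof.
move=> nNG sylP.
by rewrite setIC (card_Hall (Sylow_setI_normal nNG sylP)) logn_part.
Qed.

Lemma pgroup_mulg_eq (gT : finGroupType) (p : nat) (P A B : {group gT}) :
  prime p -> p.-group P -> A \subset P -> B \subset P ->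
  logn p #|P| + logn p #|A :&: B| <= logn p #|A| + logn p #|B| ->
  A * B = P.
Proof.
move=> pr_p pP sAP sBP le_log.
have pI : p.-group (A :&: B) := pgroupS (subset_trans (subsetIl A B) sAP) pP.
apply/eqP; rewrite eqEcard mul_subG //=.
rewrite -(leq_pmul2r (cardG_gt0 (A :&: B)%G)) -mul_cardG.
rewrite (card_pgroup pP) (card_pgroup pI) (card_pgroup (pgroupS sAP pP)).
by rewrite (card_pgroup (pgroupS sBP pP)) -!expnD leq_exp2l ?prime_gt1.
Qed.

Theorem lemma5p2 (gT : finGroupType) (G H N P : {group gT}) (p : nat) (g : gT) :
  H \subset G -> N <| G -> N * H = G ->
  prime p -> (p %| #|G : H|)%N -> (p %| #|G : N|)%N ->
  P \in 'Syl_p(G) -> g \in G ->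
  logn p #|P : P :&: H :^ g^-1| = logn p #|G : H| ->
  (P :&: N) * (P :&: H :^ g^-1) = P.
Proof.
move=> sHG nNG eNH pr_p _ _; rewrite inE => sylP Gg log_PK.
set K := (H :^ g^-1)%G.
have GgV : g^-1 \in G by rewrite groupV.
have sKG : K \subset G by rewrite -(conjGid GgV) conjSg.
have iKH : #|G : K| = #|G : H| by rewrite -{1}(conjGid GgV) indexJg.
have iNK : #|N : N :&: K| = #|G : H|.
  by rewrite (index_normal_setI nNG sKG) // (mulg_conj_normal nNG eNH GgV).
have sI : (P :&: N) :&: (P :&: K) \subset N :&: K.
  by rewrite setIACA subsetIr.
apply: pgroup_mulg_eq pr_p (pHall_pgroup sylP) (subsetIl _ _) (subsetIl _ _) _.
rewrite (logn_card_Sylow_setI_normal nNG sylP).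
rewrite (logn_card_LagrangeI p P K) log_PK (logn_card_LagrangeI p N K) iNK.
by rewrite addnAC leq_add2r leq_add2l dvdn_leq_log ?cardG_gt0 ?cardSg.
Qed.
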